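(* Let $T\subseteq\mathbb{R}^n$ be an action set. If $T'$ is a face of $T$, then $T'$ is an action set.
   Context: Single-commodity network pricing setting: $G=(\mathcal{V},\mathcal{A})$ directed graph, arc costs $c\ge0$, nonempty tolled arc set $\mathcal{A}_1\subsetneq\mathcal{A}$, $n=|\mathcal{A}_1|$, $N$ node–arc incidence matrix, single origin $o$ and destination $d$ connected by a toll-free path, $b_o=1$, $b_d=-1$, $b_i=0$ otherwise, $\mathcal{X}=\{x\in\mathbb{R}^{\mathcal{A}}: Nx=b,\ x\ge0\}$, $x_{\mathcal{A}_1}$ the restriction of $x$ to $\mathcal{A}_1$. Let $f(t)=\min\{c^\top x+t^\top x_{\mathcal{A}_1}: x\in\mathcal{X}\}$ for $t\in\mathbb{R}^n$, $t\ge0$, and $f(t)=-\infty$ otherwise. A set $T\subseteq\mathbb{R}^n$ is an action set if there is a face $F$ of the polyhedron $\operatorname{epi}(-f)\subseteq\mathbb{R}^n\times\mathbb{R}$ such that (i) the direction $(0,1)$ does not belong to the linear subspace parallel to $\operatorname{aff}(F)$ ($F$ is non-vertical), and (ii) $T=\{t\in\mathbb{R}^n : (t,z)\in F\text{ for some } z\}$. *)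

From HB Require Import structures.
From mathcomp Require Import all_boot all_order all_algebra.
From mathcomp Require Import all_classical all_reals ereal.
Set Implicit Arguments. Unset Strict Implicit. Unset Printing Implicit Defensive.
Import Order.TTheory GRing.Theory Num.Theory.
Local Open Scope classical_set_scope.
Local Open Scope ring_scope.

Section Defs.
Variable R : realType.

Definition dotv (m : nat) (u v : 'rV[R]_m) : R := \sum_(i < m) u ord0 i * v ord0 i.

(* F is a face of the set P : F = P ∩ {x | a.x = beta} for a valid inequality
   a.x <= beta of P (standard convention; includes P itself and possibly set0) *)
Definition is_face (m : nat) (P F : set 'rV[R]_m) : Prop :=
  exists (a : 'rV[R]_m) (beta : R),
    (forall x, P x -> dotv x a <= beta) /\
    F = P `&` [set x | dotv x a = beta].

Definition aff (m : nat) (F : set 'rV[R]_m) : set 'rV[R]_m :=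
  [set x | exists s : seq (R * 'rV[R]_m),
      (forall p, p \in s -> F p.2) /\
      \sum_(p <- s) p.1 = 1 /\
      x = \sum_(p <- s) p.1 *: p.2].

Definition lin_parallel (m : nat) (F : set 'rV[R]_m) : set 'rV[R]_m :=
  [set u - v | u in aff F & v in aff F].

Definition pairv (n : nat) (t : 'rV[R]_n) (z : R) : 'rV[R]_(n + 1) :=
  row_mx t (\row_(j < 1) z).

Section Network.
Variables (V A : finType) (src dst : A -> V) (A1 : {set A}) (c : A -> R) (o d : V).

Local Notation n := #|A1|.

(* the i-th tolled arc (fixed enumeration of A1, identifying R^{A1} with R^n) *)
Definition tolled (i : 'I_n) : A := enum_val i.

Definition bvec (v : V) : R := if v == o then 1 else if v == d then -1 else 0.

(* X = { x | N x = b, x >= 0 }, with N the node-arc incidence matrix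
   (+1 at the tail of an arc, -1 at its head) *)
Definition flows : set (A -> R) :=
  [set x | (forall a, 0 <= x a) /\
     forall v, \sum_(a | src a == v) x a - \sum_(a | dst a == v) x a = bvec v].

Definition cost (t : 'rV[R]_n) (x : A -> R) : R :=
  \sum_a c a * x a + \sum_(i < n) t ord0 i * x (tolled i).

(* f(t) = min {c^T x + t^T x_A1 : x in X} for t >= 0, -oo otherwise
   (the minimum is written as an infimum; it is attained) *)
Definition fval (t : 'rV[R]_n) : \bar R :=
  if [forall i, 0 <= t ord0 i] then ereal_inf [set (cost t x)%:E | x in flows]
  else -oo%E.

Definition epi_negf : set 'rV[R]_(n + 1) :=
  [set y | exists t z, y = pairv t z /\ (- fval t <= z%:E)%E].

Definition non_vertical (F : set 'rV[R]_(n + 1)) : Prop :=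
  ~ lin_parallel F (pairv 0 1).

Definition action_set (T : set 'rV[R]_n) : Prop :=
  exists F, is_face epi_negf F /\ non_vertical F /\
    T = [set t | exists z, F (pairv t z)].

Definition toll_free_path : Prop :=
  exists (a0 : A) (p : seq A),
    src a0 = o /\ dst (last a0 p) = d /\
    path (fun a b => dst a == src b) a0 p /\
    all (fun a => a \notin A1) (a0 :: p).

End Network.
End Defs.

From Pilot Require Import Defs.
From HB Require Import structures.
From mathcomp Require Import all_boot all_order all_algebra.
From mathcomp Require Import all_classical all_reals ereal.
From mathcomp Require Import ring lra.
Set Implicit Arguments. Unset Strict Implicit. Unset Printing Implicit Defensive.
Import Order.TTheory GRing.Theory Num.Theory.
Local Open Scope classical_set_scope.
Local Open Scope ring_scope.

(* epi(-f) is a polyhedron: for t >= 0 the minimum defining f(t) is attained at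
   one of the finitely many basic flows (flows determined by their support, reached
   from any flow by a ratio test along a cost-nonincreasing direction), so epi(-f)
   is cut out by t >= 0 and by z >= -(c x + t x_A1) for the basic flows x.  In a
   polyhedron a nonempty face is exactly the set where the constraints tight on it
   hold with equality, so a face of a face is again a face.  If T' = T /\ {a t = b}
   for an inequality a t <= b valid on the projection T of the face F, then
   F /\ {a t = b} is a face of F, hence of epi(-f); it projects onto T' and is
   non-vertical because it lies in F. *)

Section Dotv.
Variables (R : realType) (m : nat).
Implicit Types (x y u v : 'rV[R]_m).

Lemma dotvDl x y v : dotv (x + y) v = dotv x v + dotv y v.
Proof. by rewrite /dotv -big_split; apply: eq_bigr => i _; rewrite mxE mulrDl. Qed.

Lemma dotvZl k x v : dotv (k *: x) v = k * dotv x v.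
Proof. by rewrite /dotv mulr_sumr; apply: eq_bigr => i _; rewrite mxE mulrA. Qed.

Lemma dotvBl x y v : dotv (x - y) v = dotv x v - dotv y v.
Proof. by rewrite dotvDl -scaleN1r dotvZl mulN1r. Qed.

Lemma dotv0l v : dotv 0 v = 0.
Proof. by rewrite /dotv big1 // => i _; rewrite mxE mul0r. Qed.

Lemma dotv_suml (I : finType) (q : I -> 'rV[R]_m) v :
  dotv (\sum_i q i) v = \sum_i dotv (q i) v.
Proof. exact: (big_morph (fun x => dotv x v) (fun x y => dotvDl x y v) (dotv0l v)). Qed.

Lemma dotvDr x u v : dotv x (u + v) = dotv x u + dotv x v.
Proof. by rewrite /dotv -big_split; apply: eq_bigr => i _; rewrite mxE mulrDr. Qed.

Lemma dotv0r x : dotv x 0 = 0.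
Proof. by rewrite /dotv big1 // => i _; rewrite mxE mulr0. Qed.

Lemma dotvNr x v : dotv x (- v) = - dotv x v.
Proof. by rewrite /dotv -sumrN; apply: eq_bigr => i _; rewrite mxE mulrN. Qed.

Lemma dotv_sumr (I : finType) (P : pred I) x (q : I -> 'rV[R]_m) :
  dotv x (\sum_(i | P i) q i) = \sum_(i | P i) dotv x (q i).
Proof. exact: (big_morph (dotv x) (dotvDr x) (dotv0r x)). Qed.

Lemma dotv_delta x i : dotv x (delta_mx 0 i) = x ord0 i.
Proof.
rewrite /dotv (bigD1 i) //= big1 => [|j /negbTE ji]; rewrite mxE.
  by rewrite !eqxx mulr1 addr0.
by rewrite ji andbF mulr0.
Qed.

End Dotv.

Lemma dotv_pairv (R : realType) (n : nat) (t a : 'rV[R]_n) (z b : R) :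
  dotv (pairv t z) (pairv a b) = dotv t a + z * b.
Proof.
rewrite /dotv big_split_ord /=; congr (_ + _).
  by apply: eq_bigr => i _; rewrite /pairv !row_mxEl.
by rewrite big_ord1 /pairv !row_mxEr !mxE.
Qed.

Lemma pairv_surj (R : realType) (n : nat) (y : 'rV[R]_(n + 1)) :
  exists t z, y = pairv t z.
Proof.
exists (lsubmx y), (rsubmx y ord0 ord0).
rewrite /pairv -{1}(hsubmxK y); congr row_mx; apply/rowP => j.
by rewrite mxE (ord1 j).
Qed.

Section Centroid.
Variables (R : realType) (m : nat) (I : finType) (q : I -> 'rV[R]_m).

Definition centroid : 'rV[R]_m := (#|I|%:R : R)^-1 *: \sum_i q i.

Let natr_card_gt0 (i : I) : 0 < #|I|%:R :> R.
Proof. by rewrite ltr0n; apply/card_gt0P; exists i. Qed.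

Lemma centroid_le (i0 : I) v b : (forall i, dotv (q i) v <= b) -> dotv centroid v <= b.
Proof.
move=> le_qb; rewrite dotvZl dotv_suml ler_pdivrMl ?(natr_card_gt0 i0) //.
by rewrite mulr_natl -sumr_const; apply: ler_sum.
Qed.

Lemma centroid_eq (i0 : I) v b : (forall i, dotv (q i) v = b) -> dotv centroid v = b.
Proof.
move=> eq_qb; rewrite dotvZl dotv_suml (eq_bigr _ (fun i _ => eq_qb i)).
by rewrite sumr_const -[b *+ _]mulr_natl mulKf // lt0r_neq0 ?(natr_card_gt0 i0).
Qed.

Lemma centroid_lt v b j : (forall i, dotv (q i) v <= b) -> dotv (q j) v < b ->
  dotv centroid v < b.
Proof.
move=> le_qb lt_qjb; rewrite dotvZl dotv_suml ltr_pdivrMl ?(natr_card_gt0 j) //.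
rewrite mulr_natl -sumr_const.
by rewrite (bigD1 j) //= [ltRHS](bigD1 j) //= ltr_leD // ler_sum.
Qed.

End Centroid.

Section Polyhedra.
Variables (R : realType) (m : nat).
Implicit Types (P F G : set 'rV[R]_m).

Definition polyhedron (K : finType) (u : K -> 'rV[R]_m) (r : K -> R) (E : set K) :
    set 'rV[R]_m :=
  [set y | (forall k, dotv y (u k) <= r k) /\ (forall k, E k -> dotv y (u k) = r k)].

Definition polyhedral P :=
  exists (K : finType) (u : K -> 'rV[R]_m) (r : K -> R), P = polyhedron u r set0.

Definition tight_set (K : finType) (u : K -> 'rV[R]_m) (r : K -> R) F : set K :=
  [set k | forall y, F y -> dotv y (u k) = r k].

Lemma face_subset P F : is_face P F -> F `<=` P.
Proof. by move=> [a [b [_ ->]]] y []. Qed.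

Lemma is_face_set0 P : is_face P set0.
Proof.
exists 0, 1; split=> [y _|]; first by rewrite dotv0r ler01.
by apply/esym/seteqP; split=> // y [_ /=]; rewrite dotv0r => /eqP; rewrite eq_sym oner_eq0.
Qed.

Section Constraints.
Variables (K : finType) (u : K -> 'rV[R]_m) (r : K -> R).

Lemma polyhedron_subset (E E' : set K) :
  E `<=` E' -> polyhedron u r E' `<=` polyhedron u r E.
Proof. by move=> EE' y [le_y eq_y]; split=> // k /EE'; apply: eq_y. Qed.

Lemma polyhedron_relint (E : set K) : polyhedron u r E !=set0 ->
  exists2 y0, polyhedron u r E y0 &
    forall k, ~ tight_set u r (polyhedron u r E) k -> dotv y0 (u k) < r k.
Proof.
set P := polyhedron u r E => -[y1 Py1].
have witness k : exists y, P y /\ (~ tight_set u r P k -> dotv y (u k) < r k).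
  have [|/existsNP[y /not_implyP[Py neq]]] := pselect (tight_set u r P k).
    by exists y1.
  by exists y; split=> // _; rewrite lt_neqAle (Py.1 k) andbT; apply/eqP.
have [p Pp] := choice witness.
pose q (i : option K) := if i is Some k then p k else y1.
have Pq i : P (q i) by case: i => [k|] //; apply: (Pp k).1.
exists (centroid q); last first.
  move=> k ntk; apply: (centroid_lt (j := Some k)) => [i|]; first exact: (Pq i).1.
  exact: (Pp k).2.
split=> [k|k Ek]; first by apply: (centroid_le None) => i; apply: (Pq i).1.
by apply: (centroid_eq None) => i; apply: (Pq i).2.
Qed.

Lemma relint_extension (Q : set K) y0 y :
    (forall k, Q k -> dotv y0 (u k) = r k /\ dotv y (u k) = r k) ->
    (forall k, ~ Q k -> dotv y0 (u k) < r k) ->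
  exists2 e, 0 < e & polyhedron u r Q (y0 + e *: (y0 - y)).
Proof.
move=> eqQ ltQ.
pose slack k := (r k - dotv y0 (u k)) / (1 + `|dotv y0 (u k) - dotv y (u k)|).
pose e := \big[Order.min/1]_(k | ~~ `[< Q k >]) slack k.
have e_gt0 : 0 < e.
  apply: lt_bigmin => // k /asboolPn /ltQ lt_k.
  by rewrite divr_gt0 ?subr_gt0 // ltr_wpDr.
have dotvE v : dotv (y0 + e *: (y0 - y)) v = dotv y0 v + e * (dotv y0 v - dotv y v).
  by rewrite dotvDl dotvZl dotvBl.
exists e => //; split=> k; rewrite dotvE; last by case/eqQ=> -> ->; rewrite subrr mulr0 addr0.
have [/eqQ[-> ->]|nQk] := pselect (Q k); first by rewrite subrr mulr0 addr0.
have e_le : e <= slack k by apply: bigmin_le_cond; apply/asboolPn.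
set d := dotv y0 (u k) - dotv y (u k) in e_le *.
have lt_k := ltQ k nQk.
rewrite ler_pdivlMr ?ltr_wpDr // in e_le.
have := ler_norm d; nra.
Qed.

End Constraints.

Lemma face_polyhedron (K : finType) (u : K -> 'rV[R]_m) (r : K -> R) (E : set K) F :
  is_face (polyhedron u r E) F -> F !=set0 -> F = polyhedron u r (tight_set u r F).
Proof.
move=> [a [b [valid defF]]] neF.
pose u' (i : option K) := if i is Some k then u k else a.
pose r' (i : option K) := if i is Some k then r k else b.
(* F is a polyhedron itself, with its supporting hyperplane as one more equality. *)
have F'E : F = polyhedron u' r' [set i | if i is Some k then E k else True].
  rewrite defF; apply/seteqP; split=> y.
    by move=> [[le_y eq_y] /= ya]; split=> -[k|] /=; rewrite ?ya //; apply: eq_y.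
  move=> [le_y eq_y]; split; last exact: (eq_y None).
  by split=> k; [apply: (le_y (Some k)) | apply: (eq_y (Some k))].
rewrite F'E in neF; have [y0 Fy0 lt_y0] := polyhedron_relint neF.
rewrite -F'E in Fy0 lt_y0.
have tightE : E `<=` tight_set u r F.
  by move=> k Ek y; rewrite defF => -[[_ eq_y] _]; exact: eq_y.
apply/seteqP; split=> [y Fy|y [le_y eq_y]].
  by split=> [k|k tk]; [move: Fy; rewrite defF => -[[le_y _] _] | exact: tk].
have Py : polyhedron u r E y := polyhedron_subset tightE (conj le_y eq_y).
rewrite defF; split=> //=; apply/eqP; rewrite eq_le valid //=.
have [e e_gt0 Pz] := relint_extension (fun k tk => conj (tk y0 Fy0) (eq_y k tk))
  (fun k => lt_y0 (Some k)).
have y0a : dotv y0 a = b by move: Fy0; rewrite defF => -[].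
have := valid _ (polyhedron_subset tightE Pz).
by rewrite dotvDl dotvZl dotvBl y0a gerDl pmulr_rle0 // subr_le0.
Qed.

Lemma is_face_polyhedron (K : finType) (u : K -> 'rV[R]_m) (r : K -> R) (E : set K) :
  is_face (polyhedron u r set0) (polyhedron u r E).
Proof.
exists (\sum_(k | `[< E k >]) u k), (\sum_(k | `[< E k >]) r k); split.
  by move=> y [le_y _]; rewrite dotv_sumr; apply: ler_sum.
apply/seteqP; split=> y.
  by move=> [le_y eq_y]; split=> //=; rewrite dotv_sumr; apply: eq_bigr => k /asboolP/eq_y.
move=> [[le_y _] /= eq_sum]; split=> // k Ek; apply/eqP; rewrite eq_sym -subr_eq0.
have slack_ge0 j : `[< E j >] -> 0 <= r j - dotv y (u j) by rewrite subr_ge0.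
apply/eqP/(psumr_eq0P slack_ge0) => //; last exact/asboolP.
by rewrite sumrB -dotv_sumr eq_sum subrr.
Qed.

Lemma polyhedral_face_trans P F G :
  polyhedral P -> is_face P F -> is_face F G -> is_face P G.
Proof.
move=> [K [u [r ->]]] PF FG.
have [->|/set0P neG] := eqVneq G set0; first exact: is_face_set0.
have neF : F !=set0 := subset_nonempty (face_subset FG) neG.
rewrite (face_polyhedron PF neF) in FG.
rewrite (face_polyhedron FG neG); exact: is_face_polyhedron.
Qed.

Lemma aff_subset F G : F `<=` G -> aff F `<=` aff G.
Proof. by move=> FG x [s [sF sx]]; exists s; split=> // p /sF /FG. Qed.

Lemma lin_parallel_subset F G : F `<=` G -> lin_parallel F `<=` lin_parallel G.
Proof.
move=> FG _ [u Fu [v Fv <-]]; exists u; first exact: aff_subset Fu.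
by exists v => //; apply: aff_subset Fv.
Qed.

End Polyhedra.

Lemma ratio_test (R : realFieldType) (A : finType) (x dx : A -> R) :
  (forall a, 0 <= x a) -> (exists a, dx a < 0) ->
  exists2 lam, 0 <= lam & (forall a, 0 <= x a + lam * dx a) /\
    exists2 a0, dx a0 < 0 & x a0 + lam * dx a0 = 0.
Proof.
move=> x_ge0 [a1 dxa1].
have [a0 dxa0 lam_min] :=
  @arg_minP _ _ A a1 (fun a => dx a < 0) (fun a => x a / - dx a) dxa1.
exists (x a0 / - dx a0); first by rewrite divr_ge0 // oppr_ge0 ltW.
split; last by exists a0 => //; field; rewrite lt_eqF.
move=> a; have [dxa|dxa] := ltP (dx a) 0; last first.
  by rewrite addr_ge0 // mulr_ge0 // divr_ge0 // oppr_ge0 ltW.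
by have := lam_min a dxa; rewrite ler_pdivlMr ?oppr_gt0 // mulrN; lra.
Qed.

Section Flows.
Variables (R : realType) (V A : finType) (src dst : A -> V) (A1 : {set A}).
Variables (c : A -> R) (o d : V).
Hypothesis c_ge0 : forall a, 0 <= c a.
Local Notation n := #|A1|.
Local Notation flow := (flows src dst o d).
Local Notation cost := (cost c).
Implicit Types (x y : A -> R) (t : 'rV[R]_n).

Definition support x : {set A} := [set a | x a != 0].

Definition basic_flow x :=
  flow x /\ forall y, flow y -> (forall a, x a = 0 -> y a = 0) -> y = x.

Lemma flow_lerp x y mu : flow x -> flow y ->
  (forall a, 0 <= x a + mu * (y a - x a)) -> flow (fun a => x a + mu * (y a - x a)).
Proof.
move=> [_ x_cons] [_ y_cons] ge0; split=> // v.
have sum_lerp (P : pred A) : \sum_(a | P a) (x a + mu * (y a - x a)) =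
    \sum_(a | P a) x a + mu * (\sum_(a | P a) y a - \sum_(a | P a) x a).
  by rewrite big_split /= -sumrB mulr_sumr.
rewrite !sum_lerp.
have -> : forall a b e f : R,
    a + mu * (b - a) - (e + mu * (f - e)) = (a - e) + mu * ((b - f) - (a - e)).
  by move=> *; ring.
by rewrite x_cons y_cons subrr mulr0 addr0.
Qed.

Lemma cost_lerp t x y mu : cost t (fun a => x a + mu * (y a - x a)) =
  cost t x + mu * (cost t y - cost t x).
Proof.
have sum_lerp (I : finType) (w f g : I -> R) :
    \sum_j w j * (f j + mu * (g j - f j)) =
    \sum_j w j * f j + mu * (\sum_j w j * g j - \sum_j w j * f j).
  by rewrite -sumrB mulr_sumr -big_split; apply: eq_bigr => j _ /=; ring.
rewrite /Defs.cost (sum_lerp _ c x y) (sum_lerp _ _ (x \o @tolled _ A1) (y \o @tolled _ A1)).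
ring.
Qed.

Lemma cost_le t x y : (forall i, 0 <= t ord0 i) -> (forall a, x a <= y a) ->
  cost t x <= cost t y.
Proof. by move=> t_ge0 le_xy; rewrite lerD // ler_sum // => *; apply: ler_wpM2l. Qed.

Lemma descent_sign t x y : (forall i, 0 <= t ord0 i) -> y <> x ->
  exists2 s : R, s * (cost t y - cost t x) <= 0 & exists a, s * (y a - x a) < 0.
Proof.
move=> t_ge0 neq_yx.
have increase_somewhere : ~ (forall a, y a <= x a) -> exists a, x a < y a.
  by move=> /existsNP[a /negP]; rewrite -ltNge; exists a.
have [le_xy|/existsNP[a /negP]] := pselect (forall a, x a <= y a).
  have [a xa_lt] : exists a, x a < y a.
    apply: increase_somewhere => le_yx; apply: neq_yx; apply: funext => a.
    by apply/eqP; rewrite eq_le le_xy le_yx.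
  exists (-1); last by exists a; rewrite mulN1r oppr_lt0 subr_gt0.
  by rewrite mulN1r oppr_le0 subr_ge0 cost_le.
rewrite -ltNge => ya_lt; have [D_le|D_gt] := lerP (cost t y) (cost t x).
  by exists 1; [rewrite mul1r subr_le0 | exists a; rewrite mul1r subr_lt0].
have [a' xa'_lt] : exists a, x a < y a.
  by apply: increase_somewhere => le_yx; move: D_gt; rewrite ltNge cost_le.
exists (-1); last by exists a'; rewrite mulN1r oppr_lt0 subr_gt0.
by rewrite mulN1r oppr_le0 subr_ge0 ltW.
Qed.

Lemma shrink_support t x : (forall i, 0 <= t ord0 i) -> flow x -> ~ basic_flow x ->
  exists x', [/\ flow x', support x' \proper support x & cost t x' <= cost t x].
Proof.
move=> t_ge0 fx /not_andP[//|/existsNP[y /not_implyP[fy /not_implyP[y_supp neq_yx]]]].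
have [s sD_le [a1 sd_lt]] := descent_sign t_ge0 neq_yx.
have [lam lam_ge0 [x'_ge0 [a0 sd_a0 x'a0]]] :=
  ratio_test (dx := fun a => s * (y a - x a)) fx.1 (ex_intro _ a1 sd_lt).
pose mu := lam * s.
have x'E a : x a + mu * (y a - x a) = x a + lam * (s * (y a - x a)) by rewrite mulrA.
exists (fun a => x a + mu * (y a - x a)); split.
- by apply: flow_lerp => // a; rewrite x'E.
- apply/properP; split.
    apply/fintype.subsetP => a; rewrite !inE; apply: contraNN => /eqP xa0.
    by rewrite xa0 (y_supp a xa0) subrr mulr0 addr0.
  exists a0; rewrite !inE; last by rewrite x'E x'a0 eqxx.
  by apply: contraTN sd_a0 => /eqP xa0; rewrite (y_supp _ xa0) xa0 subrr mulr0 ltxx.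
- by rewrite cost_lerp gerDl -mulrA; apply: mulr_ge0_le0.
Qed.

Lemma exists_basic_flow_le t x : (forall i, 0 <= t ord0 i) -> flow x ->
  exists2 x', basic_flow x' & cost t x' <= cost t x.
Proof.
move=> t_ge0; have [k] := ubnP #|support x|; elim: k x => [//|k IH] x supp_lt fx.
have [bx|nbx] := pselect (basic_flow x); first by exists x.
have [x' [fx' /proper_card supp_lt' le_cost]] := shrink_support t_ge0 fx nbx.
have [x'' bx'' le_cost'] := IH x' (leq_trans supp_lt' supp_lt) fx'.
by exists x''; last exact: le_trans le_cost.
Qed.

Lemma basic_flow_eq x y : basic_flow x -> basic_flow y -> support x = support y -> y = x.
Proof.
move=> [_ x_min] [fy _] eq_supp; apply: (x_min y fy) => a xa0.
have : a \notin support y by rewrite -eq_supp inE xa0 eqxx.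
by rewrite inE negbK => /eqP.
Qed.

Lemma basic_flows_finite : exists (K : finType) (g : K -> A -> R),
  forall x, basic_flow x <-> exists k, x = g k.
Proof.
pose supported S := exists x, basic_flow x /\ support x = S.
have pick S : exists y, supported S -> basic_flow y /\ support y = S.
  by have [[x bx]|nS] := pselect (supported S); [exists x | exists (fun _ => 0)].
have [xS xSP] := choice pick.
exists {S : {set A} | `[< supported S >]}, (fun k => xS (val k)) => x; split.
  move=> bx; have suppx : `[< supported (support x) >] by apply/asboolP; exists x.
  exists (exist (fun S => `[< supported S >]) _ suppx) => /=.
  have [bS sS] := xSP _ (asboolW suppx).
  exact: basic_flow_eq.
by move=> [[S suppS] ->]; have [] := xSP S (asboolW suppS).
Qed.

Definition toll_part x : 'rV[R]_n := \row_i x (tolled i).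

Lemma toll_constraintP t z x :
  dotv (pairv t z) (pairv (- toll_part x) (-1)) <= \sum_a c a * x a <-> - z <= cost t x.
Proof.
rewrite dotv_pairv dotvNr /Defs.cost /dotv.
under eq_bigr do rewrite mxE.
by split=> ?; lra.
Qed.

Lemma le_negf_fval t z : (- fval src dst c o d t <= z%:E)%E <->
  (forall i, 0 <= t ord0 i) /\ forall x, basic_flow x -> - z <= cost t x.
Proof.
rewrite /fval; case: ifPn => [/forallP t_ge0|/forallPn[i /negP ti_lt]]; last first.
  by split=> [|[/(_ i)]] //; rewrite /= leye_eq.
rewrite leeNl -EFinN; split=> [inf_le | [_ basic_le]].
  split=> // x bx; rewrite -lee_fin; apply: le_trans inf_le _.
  by apply: ereal_inf_lbound; exists x => //; exact: bx.1.
apply: le_ereal_inf_tmp => _ [x fx <-].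
have [x' bx' le_cost] := exists_basic_flow_le t_ge0 fx.
by rewrite lee_fin; apply: le_trans le_cost; apply: basic_le.
Qed.

Lemma epi_negf_polyhedral : polyhedral (@epi_negf _ _ _ src dst A1 c o d).
Proof.
have [K [g basicE]] := basic_flows_finite.
pose u (k : 'I_n + K) := match k with
  | inl i => pairv (- delta_mx 0 i) 0
  | inr k => pairv (- toll_part (g k)) (-1) end.
pose r (k : 'I_n + K) := match k with
  | inl _ => 0
  | inr k => \sum_a c a * g k a end.
have nonneg_constraint t z i : dotv (pairv t z) (u (inl i)) <= r (inl i) <-> 0 <= t ord0 i.
  by rewrite /= dotv_pairv mulr0 addr0 dotvNr dotv_delta oppr_le0.
exists ('I_n + K)%type, u, r.
apply/seteqP; split=> [_ [t [z [-> /le_negf_fval[t_ge0 basic_le]]]]|y [le_y _]].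
  split=> // -[i|k]; first exact/nonneg_constraint.
  by apply/toll_constraintP/basic_le/basicE; exists k.
have [t [z eq_y]] := pairv_surj y; rewrite {}eq_y in le_y *.
exists t, z; split=> //; apply/le_negf_fval; split=> [i|x /basicE[k ->]].
  by apply/(nonneg_constraint _ z); apply: (le_y (inl i)).
exact/toll_constraintP/(le_y (inr k)).
Qed.

End Flows.

Theorem lemma3 (R : realType) (V A : finType) (src dst : A -> V)
  (A1 : {set A}) (c : A -> R) (o d : V)
  (Hsimple : injective (fun a => (src a, dst a)))
  (HA1ne : A1 != finset.set0 :> {set A}) (HA1prop : A1 != finset.setT :> {set A})
  (Hc : forall a, 0 <= c a)
  (Hod : o != d)
  (Hpath : toll_free_path src dst A1 o d)
  (T T' : set 'rV[R]_#|A1|) :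
  action_set src dst c o d T -> is_face T T' -> action_set src dst c o d T'.
Proof.
move=> [F [faceF [nvF ->]]] [a [b [valid ->]]].
have dotv_a t z : dotv (pairv t z) (pairv a 0) = dotv t a.
  by rewrite dotv_pairv mulr0 addr0.
exists (F `&` [set y | dotv y (pairv a 0) = b]); split; [|split].
- apply: polyhedral_face_trans (epi_negf_polyhedral src dst A1 o d Hc) faceF _.
  exists (pairv a 0), b; split=> // y Fy.
  have [t [z eq_y]] := pairv_surj y; rewrite eq_y dotv_a.
  by apply: valid; exists z; rewrite -eq_y.
- by move=> vert; apply: nvF; apply: lin_parallel_subset vert; apply: subIsetl.
- apply/seteqP; split=> t /=.
    by move=> [[z Fz] ta]; exists z; split=> //=; rewrite dotv_a.
  by move=> [z [Fz /=]]; rewrite dotv_a; split=> //; exists z.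
Qed.
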